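(* Let $G$ be a free group and $f:G\to G$ an endomorphism such that for every finitely generated free group $H$ and every homomorphism $g:H\to G$, the composition $f\circ g$ is conjugate to $g$ (i.e. there is $c\in G$ with $f(g(h))=c^{-1}g(h)c$ for all $h\in H$). Then $f$ is conjugate to $\mathrm{id}_G$, i.e. there is $c\in G$ with $f(x)=c^{-1}xc$ for all $x\in G$. *)

From Stdlib Require Import List.

Record Group := {
  carrier :> Type;
  gmul : carrier -> carrier -> carrier;
  ginv : carrier -> carrier;
  gone : carrier;
  gmulA : forall x y z, gmul x (gmul y z) = gmul (gmul x y) z;
  gmul1l : forall x, gmul gone x = x;
  gmulVl : forall x, gmul (ginv x) x = gone
}.

Arguments gmul {g} _ _.
Arguments ginv {g} _.
Arguments gone {g}.

Definition is_hom (H G : Group) (g : H -> G) : Prop :=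
  forall x y : H, g (gmul x y) = gmul (g x) (g y).

Definition is_free_basis (G : Group) (B : G -> Prop) : Prop :=
  forall (K : Group) (phi : G -> K),
    exists h : G -> K,
      is_hom G K h /\ (forall x, B x -> h x = phi x) /\
      (forall h' : G -> K, is_hom G K h' -> (forall x, B x -> h' x = phi x) ->
         forall x, h' x = h x).

Definition is_free_group (G : Group) : Prop :=
  exists B : G -> Prop, is_free_basis G B.

Definition is_fg_free_group (H : Group) : Prop :=
  exists B : H -> Prop, is_free_basis H B /\
    exists l : list H, forall x, B x -> In x l.

Definition conjg {G : Group} (c x : G) : G := gmul (gmul (ginv c) x) c.

(* Let B be a basis of G. For a finite subset F of B, the subgroup generated by
   F is a retract of G and is free on F, so the hypothesis makes f agree on F
   with a conjugation.  If B contains two distinct elements a and b, the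
   conjugator is unique on every F containing a and b, because the centraliser
   of {a, b} in a free group is trivial; hence the conjugator found for {a, b}
   works for every basis element, and a homomorphism is determined by its values
   on B.  If B has at most one element, it is finite to begin with.
   The centraliser fact comes from van der Waerden's action of G on reduced
   words over B: if u commutes with a basis element a, the reduced word of u
   starts with a letter a or a^-1. *)

From Stdlib Require Import List Classical ClassicalEpsilon ProofIrrelevance.
From Stdlib Require Import FunctionalExtensionality Lia.
Import ListNotations.

Section GroupTheory.
Variable G : Group.
Implicit Types x y z c d : G.

Lemma mulgA x y z : gmul x (gmul y z) = gmul (gmul x y) z.
Proof. exact (gmulA G x y z). Qed.

Lemma mul1g x : gmul gone x = x.
Proof. exact (gmul1l G x). Qed.

Lemma mulVg x : gmul (ginv x) x = gone.
Proof. exact (gmulVl G x). Qed.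

Lemma mulKg x y : gmul (ginv x) (gmul x y) = y.
Proof. now rewrite mulgA, mulVg, mul1g. Qed.

Lemma mulgI x y z : gmul x y = gmul x z -> y = z.
Proof. intro E. now rewrite <- (mulKg x y), E, mulKg. Qed.

Lemma mulgV x : gmul x (ginv x) = gone.
Proof.
  rewrite <- (mul1g (gmul x (ginv x))).
  rewrite <- (mulVg (ginv x)) at 1.
  rewrite <- mulgA, (mulKg x). apply mulVg.
Qed.

Lemma mulg1 x : gmul x gone = x.
Proof. now rewrite <- (mulVg x), mulgA, mulgV, mul1g. Qed.

Lemma mulVKg x y : gmul x (gmul (ginv x) y) = y.
Proof. now rewrite mulgA, mulgV, mul1g. Qed.

Lemma mulg1_eq x y : gmul x y = gone -> ginv x = y.
Proof. intro E. apply (mulgI x). now rewrite mulgV, E. Qed.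

Lemma conjg_is_hom c : is_hom G G (conjg c).
Proof. intros x y. unfold conjg. now rewrite <- !mulgA, mulVKg. Qed.

Lemma conjg_eq_commute c d x :
  conjg c x = conjg d x -> gmul (gmul d (ginv c)) x = gmul x (gmul d (ginv c)).
Proof.
  unfold conjg. intro E.
  apply (f_equal (fun z => gmul d (gmul z (ginv c)))) in E.
  rewrite <- !mulgA, mulVKg, mulgV, mulg1 in E.
  now rewrite <- !mulgA.
Qed.

End GroupTheory.

Lemma morph1 (H K : Group) (h : H -> K) : is_hom H K h -> h gone = gone.
Proof. intro Hh. apply (mulgI _ (h gone)). now rewrite <- Hh, !mulg1. Qed.

Lemma morphV (H K : Group) (h : H -> K) (x : H) :
  is_hom H K h -> h (ginv x) = ginv (h x).
Proof.
  intro Hh. symmetry. apply mulg1_eq.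
  rewrite <- Hh, mulgV. exact (morph1 H K h Hh).
Qed.

Lemma val_inj {A : Type} {P : A -> Prop} (u v : {x | P x}) :
  proj1_sig u = proj1_sig v -> u = v.
Proof. exact (eq_sig_hprop (fun x => proof_irrelevance (P x)) u v). Qed.

Section Subgroup.
Variable G : Group.
Variable S : G -> Prop.
Hypothesis S1 : S gone.
Hypothesis SM : forall x y, S x -> S y -> S (gmul x y).
Hypothesis SV : forall x, S x -> S (ginv x).

Definition subgroup : Group.
Proof.
  refine (Build_Group {x : G | S x}
    (fun x y => exist _ (gmul (proj1_sig x) (proj1_sig y))
                        (SM _ _ (proj2_sig x) (proj2_sig y)))
    (fun x => exist _ (ginv (proj1_sig x)) (SV _ (proj2_sig x)))
    (exist _ gone S1) _ _ _);
  intros; apply val_inj; simpl.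
  - apply mulgA.
  - apply mul1g.
  - apply mulVg.
Defined.

End Subgroup.

Section Perm.
Variable X : Type.

Record perm := {
  pfun : X -> X;
  pinv : X -> X;
  pfunK : forall x, pfun (pinv x) = x;
  pinvK : forall x, pinv (pfun x) = x
}.

Lemma perm_ext (p q : perm) : (forall x, pfun p x = pfun q x) -> p = q.
Proof.
  destruct p as [f1 g1 fg1 gf1], q as [f2 g2 fg2 gf2]; simpl; intro E.
  assert (f1 = f2) by (apply functional_extensionality; auto). subst f2.
  assert (g1 = g2).
  { apply functional_extensionality; intro x. rewrite <- (fg2 x) at 1. apply gf1. }
  subst g2. f_equal; apply proof_irrelevance.
Qed.

Definition perm_mul (p q : perm) : perm.
Proof.
  refine {| pfun := fun x => pfun p (pfun q x); pinv := fun x => pinv q (pinv p x) |};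
  intro x.
  - now rewrite !pfunK.
  - now rewrite !pinvK.
Defined.

Definition perm_inv (p : perm) : perm :=
  {| pfun := pinv p; pinv := pfun p; pfunK := pinvK p; pinvK := pfunK p |}.

Definition perm_one : perm :=
  {| pfun := fun x => x; pinv := fun x => x;
     pfunK := fun x => eq_refl; pinvK := fun x => eq_refl |}.

Definition perm_group : Group.
Proof.
  refine (Build_Group perm perm_mul perm_inv perm_one _ _ _);
  intros; apply perm_ext; intro; simpl; auto using pinvK.
Defined.

End Perm.

Section FreeBasis.
Variable G : Group.
Variable B : G -> Prop.
Hypothesis HB : is_free_basis G B.

Lemma free_hom_eq (K : Group) (h1 h2 : G -> K) :
  is_hom G K h1 -> is_hom G K h2 -> (forall e, B e -> h1 e = h2 e) ->
  forall x, h1 x = h2 x.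
Proof.
  intros H1 H2 E x.
  destruct (HB K h1) as [h [_ [_ hU]]].
  rewrite (hU h1 H1 (fun _ _ => eq_refl) x).
  symmetry. apply hU; auto.
  intros e Be. rewrite <- E; auto.
Qed.

Lemma free_basis_generates (S : G -> Prop) (S1 : S gone)
  (SM : forall x y, S x -> S y -> S (gmul x y))
  (SV : forall x, S x -> S (ginv x)) :
  (forall e, B e -> S e) -> forall x, S x.
Proof.
  intros SB x.
  set (K := subgroup G S S1 SM SV).
  set (phi := fun y : G => match excluded_middle_informative (S y) with
                | left Sy => (exist _ y Sy : K) | right _ => (gone : K) end).
  destruct (HB K phi) as [h [Hh [hB _]]].
  assert (hK : forall y, proj1_sig (h y) = y).
  { apply (free_hom_eq G (fun y => proj1_sig (h y)) (fun y => y)).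
    - intros a b. now rewrite Hh.
    - now intros a b.
    - intros e Be. rewrite hB by assumption. unfold phi.
      destruct (excluded_middle_informative (S e)); simpl; auto.
      exfalso; auto. }
  rewrite <- (hK x). exact (proj2_sig (h x)).
Qed.

(* Homomorphisms out of H are the homomorphisms out of G killing B outside F. *)
Lemma retract_free_basis (H : Group) (F : G -> Prop) (i : H -> G) (p : G -> H) :
  is_hom H G i -> is_hom G H p -> (forall y, p (i y) = y) ->
  (forall e, F e -> B e) -> (forall e, F e -> i (p e) = e) ->
  (forall e, B e -> ~ F e -> p e = gone) ->
  is_free_basis H (fun y => F (i y)).
Proof.
  intros Hi Hp pK FB ipF pB K phi.
  destruct (HB K (fun x => if excluded_middle_informative (F x) then phi (p x) else gone))
    as [h [Hh [hB _]]].
  exists (fun y => h (i y)). split; [|split].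
  - intros a b. rewrite Hi. apply Hh.
  - intros y Fy. rewrite hB by auto.
    destruct (excluded_middle_informative (F (i y))); [|contradiction].
    now rewrite pK.
  - intros h' Hh' h'B y. rewrite <- (pK y) at 1.
    apply (free_hom_eq K (fun x => h' (p x)) h).
    + intros a b. rewrite Hp. apply Hh'.
    + exact Hh.
    + intros e Be. rewrite hB by assumption.
      destruct (excluded_middle_informative (F e)) as [Fe|nFe].
      * apply h'B. now rewrite ipF.
      * rewrite pB by assumption. exact (morph1 H K h' Hh').
Qed.

Lemma retract_onto_subbasis (F : G -> Prop) : (forall e, F e -> B e) ->
  exists (H : Group) (i : H -> G) (p : G -> H),
    is_hom H G i /\ is_hom G H p /\ (forall y, p (i y) = y) /\
    (forall e, F e -> i (p e) = e) /\ (forall e, B e -> ~ F e -> p e = gone).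
Proof.
  intro FB.
  destruct (HB G (fun x => if excluded_middle_informative (F x) then x else gone))
    as [r [Hr [rB _]]].
  assert (rF : forall e, F e -> r e = e).
  { intros e Fe. rewrite rB by auto.
    now destruct (excluded_middle_informative (F e)). }
  assert (rnF : forall e, B e -> ~ F e -> r e = gone).
  { intros e Be nFe. rewrite rB by auto.
    now destruct (excluded_middle_informative (F e)). }
  assert (rr : forall x, r (r x) = r x).
  { apply (free_hom_eq G (fun x => r (r x)) r).
    - intros a b. now rewrite !Hr.
    - exact Hr.
    - intros e Be. destruct (classic (F e)) as [Fe|nFe].
      + now rewrite !(rF e Fe).
      + rewrite (rnF e Be nFe). exact (morph1 G G r Hr). }
  assert (SM : forall x y, r x = x -> r y = y -> r (gmul x y) = gmul x y).
  { intros x y Hx Hy. now rewrite Hr, Hx, Hy. }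
  assert (SV : forall x, r x = x -> r (ginv x) = ginv x).
  { intros x Hx. now rewrite (morphV G G r x Hr), Hx. }
  exists (subgroup G (fun y => r y = y) (morph1 G G r Hr) SM SV), (@proj1_sig _ _),
    (fun x => exist (fun y => r y = y) (r x) (rr x)).
  split; [|split; [|split; [|split]]].
  - now intros a b.
  - intros a b. apply val_inj. apply Hr.
  - intros y. apply val_inj. exact (proj2_sig y).
  - intros e Fe. apply rF, Fe.
  - intros e Be nFe. apply val_inj. apply rnF; assumption.
Qed.

Lemma finite_subbasis_fg_free (l : list G) : (forall e, In e l -> B e) ->
  exists (H : Group) (i : H -> G),
    is_fg_free_group H /\ is_hom H G i /\ forall e, In e l -> exists y, i y = e.
Proof.
  intro lB.
  destruct (retract_onto_subbasis (fun e => In e l) lB)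
    as [H [i [p [Hi [Hp [pK [ipl pB]]]]]]].
  exists H, i. split; [|split].
  - exists (fun y => In (i y) l). split.
    + exact (retract_free_basis H _ i p Hi Hp pK lB ipl pB).
    + exists (map p l). intros y ly. rewrite <- (pK y). now apply in_map.
  - exact Hi.
  - intros e le. exists (p e). auto.
Qed.

Lemma conjg_on_finite_subbasis (f : G -> G)
  (Hconj : forall H : Group, is_fg_free_group H ->
     forall g : H -> G, is_hom H G g ->
       exists c : G, forall h : H, f (g h) = conjg c (g h))
  (l : list G) :
  (forall e, In e l -> B e) -> exists c, forall e, In e l -> f e = conjg c e.
Proof.
  intro lB.
  destruct (finite_subbasis_fg_free l lB) as [H [i [Hfg [Hi il]]]].
  destruct (Hconj H Hfg i Hi) as [c Hc].
  exists c. intros e le. destruct (il e le) as [y <-]. apply Hc.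
Qed.

End FreeBasis.

Section ReducedWords.
Variable G : Group.
Variable B : G -> Prop.

(* The letter [(a, true)] stands for [a], and [(a, false)] for [ginv a]. *)
Definition letter := (G * bool)%type.

Definition linv (x : letter) : letter := (fst x, negb (snd x)).

Lemma linvK x : linv (linv x) = x.
Proof. destruct x as [a s]. unfold linv. simpl. now rewrite Bool.negb_involutive. Qed.

Fixpoint reduced (w : list letter) : Prop :=
  match w with
  | y :: (z :: _) as t => z <> linv y /\ reduced t
  | _ => True
  end.

Lemma reduced_tail y t : reduced (y :: t) -> reduced t.
Proof. destruct t; simpl; tauto. Qed.

Definition normal (w : list letter) : Prop :=
  reduced w /\ Forall (fun y => B (fst y)) w.

(* Acting by a letter outside the basis is the identity, so that normal words
   are preserved. *)
Definition lmul_letter (x : letter) (w : list letter) : list letter :=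
  if excluded_middle_informative (B (fst x)) then
    match w with
    | [] => [x]
    | y :: t => if excluded_middle_informative (y = linv x) then t else x :: w
    end
  else w.

Lemma normal_lmul_letter x w : normal w -> normal (lmul_letter x w).
Proof.
  unfold lmul_letter. destruct (excluded_middle_informative (B (fst x))) as [Bx|]; auto.
  intros [Rw Fw]. destruct w as [|y t].
  - split; simpl; auto.
  - destruct (excluded_middle_informative (y = linv x)) as [E|E].
    + inversion Fw. split; eauto using reduced_tail.
    + split; simpl; auto.
Qed.

Lemma lmul_letterK x w : normal w -> lmul_letter (linv x) (lmul_letter x w) = w.
Proof.
  intros [Rw _]. unfold lmul_letter. change (fst (linv x)) with (fst x).
  destruct (excluded_middle_informative (B (fst x))) as [Bx|]; auto.
  rewrite linvK.
  destruct w as [|y t].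
  - now destruct (excluded_middle_informative (x = x)).
  - destruct (excluded_middle_informative (y = linv x)) as [E|E].
    + destruct t as [|z t]; [now subst|].
      destruct (excluded_middle_informative (z = x)) as [<-|]; [|now subst].
      exfalso. destruct Rw as [Rz _]. subst. apply Rz. now rewrite linvK.
    + now destruct (excluded_middle_informative (x = x)).
Qed.

Definition normal_word := {w | normal w}.

Definition letter_perm (x : letter) : perm_group normal_word.
Proof.
  refine {| pfun := fun w => exist _ (lmul_letter x (proj1_sig w))
                                   (normal_lmul_letter x _ (proj2_sig w));
            pinv := fun w => exist _ (lmul_letter (linv x) (proj1_sig w))
                                   (normal_lmul_letter _ _ (proj2_sig w)) |};
  intro w; apply val_inj; simpl.
  - rewrite <- (linvK x) at 1. apply lmul_letterK, (proj2_sig w).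
  - apply lmul_letterK, (proj2_sig w).
Defined.

Definition letter_val (y : letter) : G := if snd y then fst y else ginv (fst y).

Fixpoint word_val (w : list letter) : G :=
  match w with [] => gone | y :: t => gmul (letter_val y) (word_val t) end.

Definition lmul_word (w v : list letter) : list letter := fold_right lmul_letter v w.

Lemma lmul_word_letter x : B (fst x) -> forall w, normal w ->
  (exists w', w = w' ++ [linv x] /\ lmul_word w [x] = w') \/ lmul_word w [x] = w ++ [x].
Proof.
  intro Bx. induction w as [|y t IH]; intros [Rw Fw]; [now right|].
  inversion Fw as [|? ? By Ft]; subst.
  destruct (IH (conj (reduced_tail y t Rw) Ft)) as [[t' [Et Mt]]|Mt];
    simpl; rewrite Mt; unfold lmul_letter; simpl;
    destruct (excluded_middle_informative (B (fst y))) as [_|]; try contradiction.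
  - destruct t' as [|z t''].
    + left. exists [y]. now subst.
    + destruct (excluded_middle_informative (z = linv y)) as [E|E].
      * exfalso. subst. destruct Rw as [Rz _]. contradiction.
      * left. exists (y :: z :: t''). now subst.
  - destruct t as [|z t'']; simpl.
    + destruct (excluded_middle_informative _) as [E|E].
      * left. exists []. split; [|reflexivity]. now rewrite E, linvK.
      * now right.
    + destruct (excluded_middle_informative (z = linv y)) as [E|E].
      * destruct Rw as [Rz _]. contradiction.
      * now right.
Qed.

(* Compare lengths: [w a] is [w ++ [a]] or strictly shorter than [w], while
   [a w] is [a :: w] unless [w] starts with [ginv a]. *)
Lemma lmul_word_letter_head (a : G) (w : list letter) : B a -> normal w ->
  lmul_word w [(a, true)] = lmul_letter (a, true) w ->
  forall y t, w = y :: t -> fst y = a.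
Proof.
  intros Ba Nw E y t ->.
  destruct (lmul_word_letter (a, true) Ba (y :: t) Nw) as [[w' [E1 E2]]|E2];
    rewrite E2 in E; unfold lmul_letter in E; simpl in E;
    destruct (excluded_middle_informative (B a)) as [_|]; try contradiction;
    destruct (excluded_middle_informative _) as [->|Ey]; try reflexivity.
  - subst. apply (f_equal (@length _)) in E1. rewrite length_app in E1. simpl in E1. lia.
  - injection E as -> _. reflexivity.
Qed.

Section LetterAction.
Hypothesis HB : is_free_basis G B.
Variable psi : G -> perm_group normal_word.
Hypothesis psi_hom : is_hom G (perm_group normal_word) psi.
Hypothesis psi_B : forall e, B e -> psi e = letter_perm (e, true).

Definition word_act (u : G) (v : normal_word) : list letter := proj1_sig (pfun _ (psi u) v).

Lemma word_val_act u (v : normal_word) :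
  word_val (word_act u v) = gmul u (word_val (proj1_sig v)).
Proof.
  revert v. apply (free_basis_generates G B HB
    (fun u => forall v, word_val (word_act u v) = gmul u (word_val (proj1_sig v))));
    unfold word_act.
  - intro v. rewrite (morph1 _ _ psi psi_hom). simpl. now rewrite mul1g.
  - intros x y Hx Hy v. rewrite psi_hom. simpl. now rewrite Hx, Hy, mulgA.
  - intros x Hx v. rewrite (morphV _ _ psi x psi_hom). simpl.
    specialize (Hx (pinv _ (psi x) v)). rewrite pfunK in Hx.
    now rewrite Hx, mulKg.
  - intros e Be v. rewrite psi_B by assumption. simpl. unfold lmul_letter; simpl.
    destruct (excluded_middle_informative (B e)) as [_|]; [|contradiction].
    destruct v as [[|y t] Nv]; simpl; [reflexivity|].
    destruct (excluded_middle_informative (y = linv (e, true))) as [->|]; [|reflexivity].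
    simpl. unfold letter_val; simpl. now rewrite mulVKg.
Qed.

Lemma word_act_word_val w : Forall (fun y => B (fst y)) w ->
  forall v : normal_word, word_act (word_val w) v = lmul_word w (proj1_sig v).
Proof.
  unfold word_act. induction w as [|[x s] t IH]; intros Fw v.
  - simpl. now rewrite (morph1 _ _ psi psi_hom).
  - inversion Fw as [|? ? Bx Ft]; subst. simpl word_val. rewrite psi_hom.
    simpl. rewrite <- IH by assumption.
    unfold letter_val; destruct s; simpl in Bx |- *.
    + now rewrite psi_B.
    + now rewrite (morphV _ _ psi x psi_hom), psi_B.
Qed.

Definition empty_word : normal_word := exist _ [] (conj I (Forall_nil _)).

Lemma word_val_act_empty u : word_val (word_act u empty_word) = u.
Proof. now rewrite word_val_act, mulg1. Qed.

Lemma commute_basis_head (a u : G) : B a -> gmul u a = gmul a u ->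
  forall y t, word_act u empty_word = y :: t -> fst y = a.
Proof.
  intros Ba Eua.
  set (w := word_act u empty_word).
  assert (Nw : normal w) by exact (proj2_sig (pfun _ (psi u) empty_word)).
  assert (Lu : forall v, proj1_sig (pfun _ (psi u) v) = lmul_word w (proj1_sig v)).
  { intro v. rewrite <- (word_val_act_empty u) at 1.
    exact (word_act_word_val w (proj2 Nw) v). }
  assert (La : forall v, proj1_sig (pfun _ (psi a) v) = lmul_letter (a, true) (proj1_sig v))
    by (intro v; now rewrite psi_B).
  assert (La0 : lmul_letter (a, true) [] = [(a, true)]).
  { unfold lmul_letter. now destruct (excluded_middle_informative (B (fst (a, true)))). }
  apply lmul_word_letter_head; [exact Ba | exact Nw |].
  apply (f_equal (fun g => proj1_sig (pfun _ (psi g) empty_word))) in Eua.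
  rewrite !psi_hom in Eua. simpl in Eua.
  rewrite Lu, !La in Eua. simpl in Eua. now rewrite La0 in Eua.
Qed.

End LetterAction.

End ReducedWords.

Lemma commute_basis_pair_eq1 (G : Group) (B : G -> Prop) (a b u : G) :
  is_free_basis G B -> B a -> B b -> a <> b ->
  gmul u a = gmul a u -> gmul u b = gmul b u -> u = gone.
Proof.
  intros HB Ba Bb nab Ea Eb.
  destruct (HB (perm_group (normal_word G B)) (fun e => letter_perm G B (e, true)))
    as [psi [Hpsi [psiB _]]].
  destruct (word_act G B psi u (empty_word G B)) as [|y t] eqn:Ew.
  - rewrite <- (word_val_act_empty G B HB psi Hpsi psiB u). now rewrite Ew.
  - exfalso. apply nab.
    rewrite <- (commute_basis_head G B HB psi Hpsi psiB a u Ba Ea y t Ew).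
    exact (commute_basis_head G B HB psi Hpsi psiB b u Bb Eb y t Ew).
Qed.

Lemma conjg_eq_on_basis_pair (G : Group) (B : G -> Prop) (a b c c' : G) :
  is_free_basis G B -> B a -> B b -> a <> b ->
  conjg c a = conjg c' a -> conjg c b = conjg c' b -> c = c'.
Proof.
  intros HB Ba Bb nab Ea Eb.
  assert (U : gmul c' (ginv c) = gone).
  { apply (commute_basis_pair_eq1 G B a b); auto using conjg_eq_commute. }
  now rewrite <- (mul1g G c), <- U, <- mulgA, mulVg, mulg1.
Qed.

Lemma subsingleton_list {A : Type} (P : A -> Prop) :
  (forall a b, P a -> P b -> a = b) -> exists l, forall x, P x <-> In x l.
Proof.
  intro Psub. destruct (classic (exists x, P x)) as [[x Px]|N].
  - exists [x]. intro y. simpl. split.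
    + intro Py. left. now apply Psub.
    + now intros [<-|[]].
  - exists []. intro y. simpl. split; [|contradiction]. intro Py. apply N. now exists y.
Qed.

Theorem lemma5p5 (G : Group) (HG : is_free_group G) (f : G -> G)
  (hf : is_hom G G f)
  (Hconj : forall H : Group, is_fg_free_group H ->
     forall g : H -> G, is_hom H G g ->
       exists c : G, forall h : H, f (g h) = conjg c (g h)) :
  exists c : G, forall x : G, f x = conjg c x.
Proof.
  destruct HG as [B HB].
  enough (fB : exists c, forall e, B e -> f e = conjg c e).
  { destruct fB as [c Hc]. exists c.
    exact (free_hom_eq G B HB G f (conjg c) hf (conjg_is_hom G c) Hc). }
  destruct (classic (exists a b, B a /\ B b /\ a <> b)) as [[a [b [Ba [Bb nab]]]]|N].
  - destruct (conjg_on_finite_subbasis G B HB f Hconj [a; b]) as [c Hc].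
    { now intros x [<-|[<-|[]]]. }
    exists c. intros e Be.
    destruct (conjg_on_finite_subbasis G B HB f Hconj [a; b; e]) as [c' Hc'].
    { now intros x [<-|[<-|[<-|[]]]]. }
    replace c with c'; [apply Hc'; simpl; auto|].
    apply (conjg_eq_on_basis_pair G B a b); auto;
      rewrite <- Hc, <- Hc'; simpl; auto.
  - destruct (subsingleton_list B) as [l Bl].
    { intros a b Ba Bb. apply NNPP. intro nab. apply N. now exists a, b. }
    destruct (conjg_on_finite_subbasis G B HB f Hconj l) as [c Hc].
    { intros e le. now apply Bl. }
    exists c. intros e Be. now apply Hc, Bl.
Qed.
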